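(* Let $\mathtt{a}\in\Sigma$. For every $k\in\mathbb{N}$ there exist $p,q\in\mathbb{N}$ with $p\neq q$ such that $\mathtt{a}^p \equiv_k \mathtt{a}^q$.
   Context: $\Sigma$ is a fixed finite alphabet. For $w \in \Sigma^*$, $\mathsf{Facs}(w)$ is the set of all factors (contiguous subwords, including $\varepsilon$ and $w$) of $w$. The structure $\mathfrak{A}_w$ representing $w$ has universe $\mathsf{Facs}(w)\cup\{\perp\}$, a ternary relation $R_\circ=\{(x,y,z)\in\mathsf{Facs}(w)^3 : x=y\cdot z\}$, for each letter $\mathtt{a}\in\Sigma$ a constant interpreted as $\mathtt{a}$ if $\mathtt{a}$ occurs in $w$ and as $\perp$ otherwise, and a constant $\varepsilon$ interpreted as the empty word. The $k$-round Ehrenfeucht–Fraïssé game on $\mathfrak{A}_w,\mathfrak{A}_v$: in each round $i$, Spoiler picks one of the two structures and an element of its universe, Duplicator answers with an element of the other structure's universe; let $a_i$ (in $\mathfrak{A}_w$) and $b_i$ (in $\mathfrak{A}_v$) be the chosen elements. Duplicator wins if the tuples $(a_1,\dots,a_k,\vec c^{\,\mathfrak{A}_w})$ and $(b_1,\dots,b_k,\vec c^{\,\mathfrak{A}_v})$, where $\vec c$ lists the interpretations of all constants, form a partial isomorphism: for all indices $i,j,l$, $a_i$ equals the interpretation of a constant $c$ iff $b_i$ equals the interpretation of $c$; $a_i=a_j$ iff $b_i=b_j$; and $a_i=a_j\cdot a_l$ iff $b_i=b_j\cdot b_l$. We write $w\equiv_k v$ if Duplicator has a winning strategy in the $k$-round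 game. *)

From mathcomp Require Import all_boot.
Set Implicit Arguments. Unset Strict Implicit. Unset Printing Implicit Defensive.

(* Elements of the structure A_w are encoded in [option (seq Sigma)]:
   [None] is bottom, [Some u] is the word u (a member of the universe iff
   u is a factor of w). *)
Section Struct.
Variable Sigma : finType.
Notation word := (seq Sigma).
Notation elt := (option word).

Definition is_factor (u w : word) : bool := infix u w.

Definition in_univ (w : word) (x : elt) : bool :=
  match x with None => true | Some u => is_factor u w end.

Definition Rcat (w : word) (x y z : elt) : bool :=
  match x, y, z with
  | Some x', Some y', Some z' =>
      [&& is_factor x' w, is_factor y' w, is_factor z' w & x' == y' ++ z']
  | _, _, _ => false
  end.

Definition const_letter (w : word) (a : Sigma) : elt :=
  if a \in w then Some [:: a] else None.

Definition consts (w : word) : seq elt :=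
  Some [::] :: [seq const_letter w a | a <- enum Sigma].

Definition partial_iso (w v : word) (xs ys : seq elt) : Prop :=
  size xs = size ys /\
  forall i j l, i < size xs -> j < size xs -> l < size xs ->
    ((nth None xs i == nth None xs j) = (nth None ys i == nth None ys j)) /\
    (Rcat w (nth None xs i) (nth None xs j) (nth None xs l) =
     Rcat v (nth None ys i) (nth None ys j) (nth None ys l)).

Fixpoint dup_wins (w v : word) (n : nat) (xs ys : seq elt) : Prop :=
  match n with
  | 0 => partial_iso w v (xs ++ consts w) (ys ++ consts v)
  | n'.+1 =>
      (forall x, in_univ w x -> exists2 y, in_univ v y &
          dup_wins w v n' (rcons xs x) (rcons ys y)) /\
      (forall y, in_univ v y -> exists2 x, in_univ w x &
          dup_wins w v n' (rcons xs x) (rcons ys y))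
  end.

Definition ef_equiv (k : nat) (w v : word) : Prop := dup_wins w v k [::] [::].
End Struct.

From mathcomp Require Import all_boot.
From Stdlib Require Import Classical ClassicalEpsilon.
Set Implicit Arguments. Unset Strict Implicit.

(* The proof is the classical "finitely many k-types" argument.  To a word w
   with m already chosen elements xs we attach its rank-n type: for n = 0 the
   table of equalities and concatenation facts among xs and the constants, and
   for n+1 the set of rank-n types of all one-element extensions of xs.  Since
   the number of constants depends only on the alphabet, all rank-n types over
   m chosen elements live in one finite type [type_space].  Two positions with
   equal rank-n types are winning for Duplicator in the n-round game
   ([eq_type_dup_wins]).  By the pigeonhole principle, any infinite family of
   words contains two words with the same rank-k type, hence two
   k-equivalent words ([ef_equiv_pigeonhole]); the theorem is the instance
   given by the unary words a^p. *)

(* Boolean reflection of an arbitrary proposition, by classical logic; needed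
   to form the (finite) set of types of extensions, which ranges over the
   infinite carrier [option (seq Sigma)]. *)
Definition decide (P : Prop) : bool :=
  if excluded_middle_informative P then true else false.

Lemma decideP (P : Prop) : decide P = true <-> P.
Proof. by rewrite /decide; case: excluded_middle_informative. Qed.

Lemma nat_to_fin_not_injective (T : finType) (f : nat -> T) :
  exists p q, p <> q /\ f p = f q.
Proof.
pose g (i : 'I_#|T|.+1) : T := f i.
have g_not_inj : ~ injective g.
  by move=> /leq_card; rewrite card_ord ltnn.
apply: NNPP => no_collision; apply: g_not_inj => i j gij.
apply: val_inj; apply: NNPP => neq_ij; apply: no_collision.
by exists (val i), (val j).
Qed.

(* [type_space c n m]: the finite type of rank-n types of positions with m
   chosen elements in a structure with c constants.  A rank-0 type records,
   for each triple of indices, whether two entries are equal and whether the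
   concatenation relation holds; a rank-(n+1) type is a set of rank-n types
   with one more chosen element. *)
Fixpoint type_space (c n m : nat) : finType :=
  match n with
  | 0 => {ffun 'I_(m + c) * 'I_(m + c) * 'I_(m + c) -> bool * bool}
  | n'.+1 => {set type_space c n' m.+1}
  end.

Section Types.
Variable Sigma : finType.
Notation word := (seq Sigma).
Notation elt := (option word).

Notation nconsts := (size (enum Sigma)).+1.

Lemma size_consts (w : word) : size (consts w) = nconsts.
Proof. by rewrite /consts /= size_map. Qed.

Definition atomic_type m (w : word) (xs : seq elt) : type_space nconsts 0 m :=
  [ffun t : 'I_(m + nconsts) * 'I_(m + nconsts) * 'I_(m + nconsts) =>
     let L := xs ++ consts w in
     (nth None L t.1.1 == nth None L t.1.2,
      Rcat w (nth None L t.1.1) (nth None L t.1.2) (nth None L t.2))].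

Fixpoint ktype n m (w : word) (xs : seq elt) : type_space nconsts n m :=
  match n return type_space nconsts n m with
  | 0 => atomic_type m w xs
  | n'.+1 =>
      [set t | decide (exists x, in_univ w x /\ ktype n' m.+1 w (rcons xs x) = t)]
  end.

Lemma mem_ktype_succ n m (w : word) (xs : seq elt) t :
  (t \in ktype n.+1 m w xs) <->
  exists x, in_univ w x /\ ktype n m.+1 w (rcons xs x) = t.
Proof. by rewrite /= inE; apply: decideP. Qed.

Lemma eq_atomic_type_partial_iso m (w v : word) (xs ys : seq elt) :
  size xs = m -> size ys = m -> atomic_type m w xs = atomic_type m v ys ->
  partial_iso w v (xs ++ consts w) (ys ++ consts v).
Proof.
move=> sx sy E; split; first by rewrite !size_cat !size_consts sx sy.
move=> i j l; rewrite size_cat size_consts sx => hi hj hl.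
have := congr1 (fun f : type_space nconsts 0 m => f (Ordinal hi, Ordinal hj, Ordinal hl)) E.
by rewrite !ffunE /= => -[-> ->].
Qed.

(* Equal rank-n types make the position winning for Duplicator in the
   n-round game: every Spoiler move on one side has a reply on the other side
   with the same rank-(n-1) type. *)
Lemma eq_type_dup_wins n : forall m (w v : word) (xs ys : seq elt),
  size xs = m -> size ys = m -> ktype n m w xs = ktype n m v ys ->
  dup_wins w v n xs ys.
Proof.
elim: n => [|n IH] m w v xs ys sx sy E /=.
  exact: eq_atomic_type_partial_iso sx sy E.
split.
- move=> x ux.
  have /mem_ktype_succ [y [uy Ey]] : ktype n m.+1 w (rcons xs x) \in ktype n.+1 m v ys.
    by rewrite -E; apply/mem_ktype_succ; exists x.
  by exists y => //; apply: IH; rewrite ?size_rcons ?sx ?sy.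
- move=> y uy.
  have /mem_ktype_succ [x [ux Ex]] : ktype n m.+1 v (rcons ys y) \in ktype n.+1 m w xs.
    by rewrite E; apply/mem_ktype_succ; exists y.
  by exists x => //; apply: IH; rewrite ?size_rcons ?sx ?sy.
Qed.

Lemma ef_equiv_pigeonhole (k : nat) (f : nat -> word) :
  exists p q, p <> q /\ ef_equiv k (f p) (f q).
Proof.
have [p [q [neq_pq E]]] := nat_to_fin_not_injective (fun p => ktype k 0 (f p) [::]).
by exists p, q; split => //; apply: eq_type_dup_wins E.
Qed.
End Types.

Theorem lemma3p4 (Sigma : finType) (a : Sigma) (k : nat) :
  exists p q : nat, p <> q /\ ef_equiv k (nseq p a) (nseq q a).
Proof. exact: ef_equiv_pigeonhole k (fun p => nseq p a). Qed.
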